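(* Let $(q(x),q(x,dy))$ be a totally stable conservative $q$-pair on a measurable space $(E,\mathscr E)$ and let $c:E\to\mathbb R$ be measurable with $\sup_x c(x)\le0$ and $q(x)-c(x)>0$ for all $x$. Set $\Omega f(x)=\int_Eq(x,dy)[f(y)-f(x)]+c(x)f(x)$. Define $z^{(0)}\equiv1$ and $z^{(n+1)}(x)=\int_E\frac{q(x,dy)}{q(x)-c(x)}z^{(n)}(y)$, $x\in E$, $n\ge0$. Then $z^{(n)}(x)$ is non-increasing in $n$ for each $x$, with limit $\bar z(x)\in[0,1]$, and there exists a bounded measurable $h:E\to\mathbb R$, not identically zero, with $\Omega h(x)=0$ for all $x\in E$ if and only if $\bar z$ is not identically zero.
   Context: A $q$-pair $(q(x),q(x,dy))$ on $(E,\mathscr E)$: for each $x$, $q(x,\cdot)$ is a nonnegative measure on $\mathscr E$, $x\mapsto q(x,A)$ is measurable; totally stable means $q(x)<\infty$ for all $x$, conservative means $q(x)=q(x,E)$ for all $x$. *)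

From HB Require Import structures.
From mathcomp Require Import all_boot all_order all_algebra.
From mathcomp Require Import all_classical all_reals all_analysis.
From mathcomp Require Import measurable_realfun.
Set Implicit Arguments. Unset Strict Implicit. Unset Printing Implicit Defensive.
Import Order.TTheory GRing.Theory Num.Theory.
Local Open Scope classical_set_scope.
Local Open Scope ring_scope.
Local Open Scope ereal_scope.

(* Totally stable:
   q(x) < oo (q is real valued). *)
Definition qpair_tsc d (E : measurableType d) (R : realType)
  (q : E -> R) (qk : E -> {measure set E -> \bar R}) : Prop :=
  (forall A, measurable A -> measurable_fun [set: E] (qk ^~ A)) /\
  (forall x, (q x)%:E = qk x setT).

Definition Omega d (E : measurableType d) (R : realType)
  (qk : E -> {measure set E -> \bar R}) (c : E -> R) (f : E -> R) (x : E)
  : \bar R :=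
  (\int[qk x]_y ((f y - f x)%R)%:E) + ((c x * f x)%R)%:E.

Fixpoint zseq d (E : measurableType d) (R : realType)
  (q : E -> R) (qk : E -> {measure set E -> \bar R}) (c : E -> R) (n : nat)
  : E -> \bar R :=
  match n with
  | 0%N => fun _ => 1
  | n'.+1 => fun x =>
      (\int[qk x]_y zseq q qk c n' y) * (((q x - c x)^-1)%R)%:E
  end.

From HB Require Import structures.
From mathcomp Require Import all_boot all_order all_algebra.
From mathcomp Require Import all_classical all_reals all_analysis.
From mathcomp Require Import measurable_realfun.
From mathcomp Require Import ring lra.
Import Order.TTheory GRing.Theory Num.Theory.
Local Open Scope classical_set_scope.
Local Open Scope ring_scope.
Local Open Scope ereal_scope.

(** Write [P f x := (q x - c x)^-1 * \int[q(x,dy)] f y], so that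
   [z^(n+1) = P z^(n)] and, for bounded [h], [Omega h = (q - c) (P h - h)] by
   conservativity.  Since [q/(q - c) <= 1], induction gives
   [0 <= z^(n+1) <= z^(n) <= 1]; dominated convergence passes [P] to the limit,
   so [zbar = P zbar] and [zbar] is itself a bounded solution of [Omega h = 0].
   Conversely, if [Omega h = 0] and [|h| <= M], then [|h| = |P h| <= P |h|], and
   induction gives [|h| <= M z^(n)] for every [n], hence [|h| <= M zbar]: a
   nonzero [h] forces [zbar] to be nonzero. *)

Lemma fine_01K {R : realType} {x : \bar R} : 0 <= x -> x <= 1 -> (fine x)%:E = x.
Proof.
by move=> x0 x1; rewrite fineK // ge0_fin_numE // (le_lt_trans x1 (ltry _)).
Qed.

Lemma bounded_normr_le {T : Type} {R : realType} (f : T -> R) (M : R) :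
  (forall x, `|f x| <= M)%R -> [bounded f x | x in setT].
Proof.
move=> fM; rewrite /bounded_near; near=> N => t _ /=.
apply: le_trans (fM t) _; near: N; exact: nbhs_pinfty_ge (num_real M).
Unshelve. all: end_near.
Qed.

Section zseq_limit.
Context d (E : measurableType d) (R : realType) (q : E -> R)
  (qk : E -> {measure set E -> \bar R}) (c : E -> R).
Hypothesis qk_tsc : qpair_tsc q qk.
Hypothesis mc : measurable_fun setT c.
Hypothesis c_le0 : forall x, (c x <= 0)%R.
Hypothesis qc_gt0 : forall x, (0 < q x - c x)%R.

Let z := zseq q qk c.
Let inv_qc x := ((q x - c x)^-1)%R.

Lemma qk_setT x : qk x setT = (q x)%:E.
Proof. by rewrite (proj2 qk_tsc x). Qed.

Lemma qk_setT_lty x : qk x setT < +oo.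
Proof. by rewrite qk_setT ltry. Qed.

Lemma measurable_q : measurable_fun setT q.
Proof.
apply/measurable_EFinP.
have -> : EFin \o q = (qk ^~ setT) by apply/funext => x; rewrite /= qk_setT.
exact: (proj1 qk_tsc).
Qed.

Lemma measurable_inv_qc : measurable_fun setT inv_qc.
Proof.
have -> : inv_qc = (fun r : R => powR r (-1)) \o (fun x => q x - c x)%R.
  by apply/funext => x; rewrite /inv_qc /= powRN powRr1 // ltW.
apply: measurableT_comp; first exact: measurable_powR.
exact: measurable_funB measurable_q mc.
Qed.

Lemma inv_qc_ge0 x : (0 <= inv_qc x)%R.
Proof. by rewrite invr_ge0 ltW. Qed.

Lemma inv_qcK x : (inv_qc x)%:E * (q x - c x)%:E = 1.
Proof. by rewrite -EFinM mulVf // lt0r_neq0. Qed.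

Lemma zS n x : z n.+1 x = (\int[qk x]_y z n y) * (inv_qc x)%:E.
Proof. by []. Qed.

Lemma z_ge0 n x : 0 <= z n x.
Proof.
elim: n x => [|n IH] x; first exact: lee01.
by rewrite zS mule_ge0 ?lee_fin ?inv_qc_ge0 // integral_ge0.
Qed.

Lemma measurable_z n : measurable_fun setT (z n).
Proof.
elim: n => [|n IH]; first exact: measurable_cst.
apply: emeasurable_funM; last exact/measurable_EFinP/measurable_inv_qc.
apply: measurable_fun_integral_kernel => //; first exact: (proj1 qk_tsc).
by move=> y; apply: z_ge0.
Qed.

Lemma z_le1 n x : z n x <= 1.
Proof.
elim: n x => [|n IH] x; first by [].
have int_le_q : \int[qk x]_y z n y <= (q x)%:E.
  apply: (@le_trans _ _ (\int[qk x]_y 1)).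
    apply: ge0_le_integral => //; last exact: measurable_z.
    by move=> y _; apply: z_ge0.
  by rewrite integral_cst // mul1e qk_setT.
rewrite zS; apply: le_trans (lee_wpmul2r _ int_le_q) _.
  by rewrite lee_fin inv_qc_ge0.
rewrite -EFinM lee_fin ler_pdivrMr // mul1r.
by have := c_le0 x; lra.
Qed.

Lemma z_nonincreasing x : {homo (z ^~ x) : m n / (m <= n)%N >-> n <= m}.
Proof.
apply/nonincreasing_seqP => n; elim: n x => [|n IH] x; first exact: z_le1.
rewrite zS [z n.+1 x]zS; apply: lee_wpmul2r; first by rewrite lee_fin inv_qc_ge0.
by apply: ge0_le_integral => //;
  [move=> y _; apply: z_ge0 | apply: measurable_z..].
Qed.

Definition zbar x := ereal_inf (range (z ^~ x)).

Lemma cvg_zbar x : z ^~ x @ \oo --> zbar x.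
Proof. exact/ereal_nonincreasing_cvgn/z_nonincreasing. Qed.

Lemma zbar_ge0 x : 0 <= zbar x.
Proof. by apply/ereal_infP => _ [n _ <-]; apply: z_ge0. Qed.

Lemma zbar_le1 x : zbar x <= 1.
Proof. by apply: ereal_inf_lbound; exists 0%N. Qed.

Lemma measurable_zbar : measurable_fun setT zbar.
Proof.
apply: (emeasurable_fun_cvg _ _ measurable_z) => // x _.
exact: cvg_zbar.
Qed.

Lemma integrable_bounded {h : E -> R} {M : R} x : measurable_fun setT h ->
  (forall y, `|h y| <= M)%R -> (qk x).-integrable setT (EFin \o h).
Proof.
move=> mh hM; apply: measurable_bounded_integrable => //.
  exact: qk_setT_lty.
exact: bounded_normr_le hM.
Qed.

Lemma integral_zbar x : \int[qk x]_y zbar y = zbar x * (q x - c x)%:E.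
Proof.
have int_1 : (qk x).-integrable setT (EFin \o cst 1%R).
  by apply: (integrable_bounded (M := 1%R)) => // y; rewrite normr1.
have z_le_1 : {ae qk x, forall y n, setT y -> `|z n y| <= (EFin \o cst 1%R) y}.
  by apply: aeW => y n _; rewrite gee0_abs ?z_ge0 ?z_le1.
have [_ _ cvg_int] := dominated_convergence measurableT measurable_z
  measurable_zbar (aeW _ (fun y _ => cvg_zbar y)) int_1 z_le_1.
have cvg_zS :
    (fun n => z n.+1 x * (q x - c x)%:E) @ \oo --> zbar x * (q x - c x)%:E.
  by apply: cvgeZr => //; have := cvg_zbar x; rewrite -cvg_shiftS.
have int_zE :
    (fun n => \int[qk x]_y z n y) = (fun n => z n.+1 x * (q x - c x)%:E).
  by apply/funext => n; rewrite zS -muleA inv_qcK mule1.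
rewrite int_zE in cvg_int.
exact: cvg_unique cvg_int cvg_zS.
Qed.

Lemma OmegaE {h : E -> R} {M : R} x : measurable_fun setT h ->
  (forall y, `|h y| <= M)%R ->
  Omega qk c h x = \int[qk x]_y (h y)%:E - ((q x - c x) * h x)%:E.
Proof.
move=> mh hM; rewrite /Omega.
under eq_integral do rewrite EFinB.
rewrite integralB_EFin //; last 2 first.
- exact: integrable_bounded hM.
- exact: (integrable_bounded (M := `|h x|)) (fun=> lexx _).
rewrite integral_cst // qk_setT.
have int_fin := integrable_fin_num measurableT (integrable_bounded x mh hM).
rewrite -(fineK int_fin) -!EFinM -EFinB -EFinD -EFinB; congr EFin; ring.
Qed.

Lemma integral_harmonic {h : E -> R} {M : R} x : measurable_fun setT h ->
  (forall y, `|h y| <= M)%R -> Omega qk c h x = 0 ->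
  \int[qk x]_y (h y)%:E = ((q x - c x) * h x)%:E.
Proof.
move=> mh hM; rewrite (OmegaE x mh hM).
have int_fin := integrable_fin_num measurableT (integrable_bounded x mh hM).
rewrite -(fineK int_fin) -EFinB => /(congr1 fine)/= /eqP.
by rewrite subr_eq0 => /eqP ->.
Qed.

Lemma harmonic_le_z {h : E -> R} {M : R} : measurable_fun setT h ->
  (forall y, `|h y| <= M)%R -> (forall x, Omega qk c h x = 0) ->
  forall n x, (`|h x|)%:E <= M%:E * z n x.
Proof.
move=> mh hM hharm; elim=> [|n IH] x; first by rewrite mule1 lee_fin.
rewrite -(@lee_pmul2r _ (q x - c x)%:E) ?lte_fin //.
rewrite zS -!muleA inv_qcK mule1 -EFinM.
have -> : (`|h x| * (q x - c x))%:E = `|\int[qk x]_y (h y)%:E|.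
  by rewrite (integral_harmonic x mh hM) //= normrM (gtr0_norm (qc_gt0 x)) mulrC.
apply: le_trans (le_abse_integral _ measurableT _) _.
  exact/measurable_EFinP.
have M_ge0 : (0 <= M)%R := le_trans (normr_ge0 _) (hM x).
rewrite -ge0_integralZl_EFin //; last 2 first.
- by move=> y _; apply: z_ge0.
- exact: measurable_z.
apply: ge0_le_integral => //.
- by apply: measurableT_comp => //; apply/measurable_EFinP.
- by apply: emeasurable_funM => //; apply: measurable_z.
- by move=> y _; apply: IH.
Qed.

Lemma harmonic_neq0_zbar_neq0 {h : E -> R} {M : R} x : measurable_fun setT h ->
  (forall y, `|h y| <= M)%R -> (forall x, Omega qk c h x = 0) ->
  h x <> 0%R -> zbar x <> 0.
Proof.
move=> mh hM hharm /eqP; rewrite -normr_gt0 => hx_gt0 zbar0.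
have M_gt0 : (0 < M)%R := lt_le_trans hx_gt0 (hM x).
have : (`|h x| / M)%:E <= zbar x.
  apply/ereal_infP => _ [n _ <-].
  have := harmonic_le_z mh hM hharm n x.
  rewrite -(fine_01K (z_ge0 n x) (z_le1 n x)) -EFinM !lee_fin.
  by rewrite ler_pdivrMr // mulrC.
by rewrite zbar0 lee_fin leNgt divr_gt0.
Qed.

Lemma fine_zbarE x : (fine (zbar x))%:E = zbar x.
Proof. exact: fine_01K (zbar_ge0 x) (zbar_le1 x). Qed.

Lemma measurable_fine_zbar : measurable_fun setT (fine \o zbar).
Proof.
by apply: measurableT_comp; [apply: fine_measurable | apply: measurable_zbar].
Qed.

Lemma normr_fine_zbar_le1 x : (`|fine (zbar x)| <= 1)%R.
Proof.
rewrite ger0_norm; last by rewrite -lee_fin fine_zbarE zbar_ge0.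
by rewrite -lee_fin fine_zbarE zbar_le1.
Qed.

Lemma Omega_fine_zbar x : Omega qk c (fine \o zbar) x = 0.
Proof.
rewrite (OmegaE x measurable_fine_zbar normr_fine_zbar_le1) /=.
under eq_integral do rewrite fine_zbarE.
by rewrite integral_zbar -{1}fine_zbarE -EFinM -EFinB mulrC subrr.
Qed.

End zseq_limit.

Theorem mainTheorem6 (d : measure_display) (E : measurableType d) (R : realType)
  (q : E -> R) (qk : E -> {measure set E -> \bar R}) (c : E -> R) :
  qpair_tsc q qk ->
  measurable_fun setT c ->
  (forall x, (c x <= 0)%R) ->
  (forall x, (0 < q x - c x)%R) ->
  (forall x (m n : nat), (m <= n)%N -> zseq q qk c n x <= zseq q qk c m x) /\
  exists zbar : E -> \bar R,
    (forall x, (fun n => zseq q qk c n x) @ \oo --> zbar x) /\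
    (forall x, 0 <= zbar x <= 1) /\
    ((exists h : E -> R,
        measurable_fun setT h /\
        (exists M : R, forall x, (`|h x| <= M)%R) /\
        (exists x, h x <> 0%R) /\
        (forall x, Omega qk c h x = 0))
     <-> (exists x, zbar x <> 0)).
Proof.
move=> qk_tsc mc c_le0 qc_gt0; split.
  by move=> x m n; apply: z_nonincreasing.
exists (@zbar _ _ _ q qk c); split; first exact: cvg_zbar.
split; first by move=> x; apply/andP; split; [apply: zbar_ge0 | apply: zbar_le1].
split=> [[h [mh [[M hM] [[x hx] hharm]]]] | [x zbar_x]].
  by exists x; apply: harmonic_neq0_zbar_neq0 hx.
exists (fine \o @zbar _ _ _ q qk c); split; first exact: measurable_fine_zbar.
split; first by exists 1%R; apply: normr_fine_zbar_le1.
split; last exact: Omega_fine_zbar.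
by exists x => /= hx0; apply: zbar_x; rewrite -fine_zbarE // hx0.
Qed.
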